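(* In the setting of the context, suppose primal nondegeneracy $\mathcal N_{X_\star}\cap\mathcal R(\mathcal A^* )=\{0\}$ and dual nondegeneracy $\mathcal N_{S_\star}\cap\mathcal N(\mathcal A)=\{0\}$ hold. Then $\mathrm{Fix}(\mathcal M)=\{0\}$.
   Context: $\mathbb S^n$: real symmetric matrices with trace inner product. SDP pair: min $\langle C,X\rangle$ s.t. $\mathcal AX=b$, $X\succeq0$ / max $b^\top y$ s.t. $\mathcal A^*y+S=C$, $S\succeq0$, $\mathcal AX=(\langle A_i,X\rangle)_i$ surjective, $\mathcal A^*y=\sum y_iA_i$, range $\mathcal R(\mathcal A^* )$, null space $\mathcal N(\mathcal A)$, KKT set nonempty. $\mathcal P=\mathcal A^*(\mathcal A\mathcal A^* )^{-1}\mathcal A$, $\mathcal P^\perp=\mathrm{Id}-\mathcal P$. One-step ADMM with $\sigma>0$: $Z^{(k+1)}=\mathcal P(-2\Pi_{\mathbb S^n_+}(Z^{(k)})+Z^{(k)})+\Pi_{\mathbb S^n_+}(Z^{(k)})+\mathcal A^*(\mathcal A\mathcal A^* )^{-1}b+\sigma\mathcal PC-\sigma C$; assume $Z^{(k)}\to Z_\star=X_\star-\sigma S_\star$, $(X_\star,y_\star,S_\star)$ a KKT point with $\operatorname{rank}X_\star+\operatorname{rank}S_\star=n$. Write $Z_\star=Q_\star\operatorname{diag}(\lambda_1,\dots,\lambda_n)Q_\star^\top$, $Q_\star$ orthogonal, $\lambda_1\ge\dots\ge\lambda_r>0>\lambda_{r+1}\ge\dots\ge\lambda_n$, $r=\operatorname{rank}X_\star$.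 $\mathcal N_{X_\star}=\{Q_\star\begin{pmatrix}0&0\\0&D\end{pmatrix}Q_\star^\top:D\in\mathbb S^{n-r}\}$, $\mathcal N_{S_\star}=\{Q_\star\begin{pmatrix}A&0\\0&0\end{pmatrix}Q_\star^\top:A\in\mathbb S^{r}\}$. $\Theta_{ij}=\lambda_j/(\lambda_j-\lambda_{i+r})$, $\Omega=\begin{pmatrix}E_r&\Theta^\top\\\Theta&0\end{pmatrix}$, $\mathcal D(H)=Q_\star(\Omega\circ(Q_\star^\top HQ_\star))Q_\star^\top$, $\mathcal D^\perp=\mathrm{Id}-\mathcal D$, $\mathcal M=\mathcal P\mathcal D^\perp+\mathcal P^\perp\mathcal D$, $\mathrm{Fix}(\mathcal M)=\{H:\mathcal M(H)=H\}$. *)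

From HB Require Import structures.
From mathcomp Require Import all_boot all_order all_algebra.
Set Implicit Arguments. Unset Strict Implicit. Unset Printing Implicit Defensive.
Import Order.TTheory GRing.Theory Num.Theory.
Local Open Scope ring_scope.

Section SDP.
Variables (R : realFieldType) (n m : nat).

Definition symmx (X : 'M[R]_n) : Prop := X^T = X.

Definition mxinner (X Y : 'M[R]_n) : R := \tr (X^T *m Y).

Definition psd (X : 'M[R]_n) : Prop :=
  symmx X /\ forall v : 'cV[R]_n, 0 <= (v^T *m X *m v) 0 0.

Definition opA (A : 'I_m -> 'M[R]_n) (X : 'M[R]_n) : 'cV[R]_m :=
  \col_i mxinner (A i) X.
Definition opAadj (A : 'I_m -> 'M[R]_n) (y : 'cV[R]_m) : 'M[R]_n :=
  \sum_i (y i 0 *: A i).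

Definition gramA (A : 'I_m -> 'M[R]_n) : 'M[R]_m :=
  \matrix_(i, j) mxinner (A i) (A j).

Definition projP (A : 'I_m -> 'M[R]_n) (H : 'M[R]_n) : 'M[R]_n :=
  opAadj A (invmx (gramA A) *m opA A H).

(* Omega = [[E_r, Theta^T],[Theta, 0]] written out entrywise, where
   Theta_{ij} = lam_j / (lam_j - lam_{i+r}) (0-indexed blocks). *)
Definition Omega (lam : 'rV[R]_n) (r : nat) : 'M[R]_n :=
  \matrix_(a, b)
    if (a < r)%N && (b < r)%N then 1
    else if (a < r)%N then lam 0 a / (lam 0 a - lam 0 b)
    else if (b < r)%N then lam 0 b / (lam 0 b - lam 0 a)
    else 0.

Definition hadamard (U V : 'M[R]_n) : 'M[R]_n := \matrix_(i, j) (U i j * V i j).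

Definition opD (Q : 'M[R]_n) (lam : 'rV[R]_n) (r : nat) (H : 'M[R]_n) : 'M[R]_n :=
  Q *m hadamard (Omega lam r) (Q^T *m H *m Q) *m Q^T.

(* calM = calP calD^perp + calP^perp calD *)
Definition opM (A : 'I_m -> 'M[R]_n) (Q : 'M[R]_n) (lam : 'rV[R]_n) (r : nat)
    (H : 'M[R]_n) : 'M[R]_n :=
  projP A (H - opD Q lam r H) + (opD Q lam r H - projP A (opD Q lam r H)).

Definition FixM (A : 'I_m -> 'M[R]_n) (Q : 'M[R]_n) (lam : 'rV[R]_n) (r : nat)
    (H : 'M[R]_n) : Prop :=
  symmx H /\ opM A Q lam r H = H.

Definition inNX (Q : 'M[R]_n) (r : nat) (H : 'M[R]_n) : Prop :=
  exists W : 'M[R]_n, symmx W /\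
    (forall a b : 'I_n, (a < r)%N || (b < r)%N -> W a b = 0) /\
    H = Q *m W *m Q^T.

Definition inNS (Q : 'M[R]_n) (r : nat) (H : 'M[R]_n) : Prop :=
  exists W : 'M[R]_n, symmx W /\
    (forall a b : 'I_n, (r <= a)%N || (r <= b)%N -> W a b = 0) /\
    H = Q *m W *m Q^T.

Definition inRangeAadj (A : 'I_m -> 'M[R]_n) (H : 'M[R]_n) : Prop :=
  exists y : 'cV[R]_m, H = opAadj A y.

Definition inNullA (A : 'I_m -> 'M[R]_n) (H : 'M[R]_n) : Prop :=
  symmx H /\ opA A H = 0.

Definition is_psd_proj (Z P : 'M[R]_n) : Prop :=
  psd P /\ forall Y, psd Y -> mxinner (Z - P) (Z - P) <= mxinner (Z - Y) (Z - Y).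

End SDP.

(* A fixed point H of M splits as H = (H - K) + K with K = D(H): applying A
   to H = M(H) gives A K = 0, while H - K = P(H - 2K) lies in the range of
   A^*, so <H - K, K> = 0.  With G = Q^T H Q we have K = Q (Omega o G) Q^T and
   H - K = Q ((1 - Omega) o G) Q^T, hence sum Omega (1 - Omega) G^2 = 0.
   Omega is 1 on the upper-left block, 0 on the lower-right one and strictly
   between 0 and 1 on the off-diagonal blocks (this is where the signs of the
   eigenvalues of Z* enter), so G is block diagonal.  Then K lies in
   N_{S*} /\ N(A) and H - K in N_{X*} /\ range(A^* ), and both vanish by
   nondegeneracy. *)
From HB Require Import structures.
From mathcomp Require Import all_boot all_order all_algebra ring lra.
Set Implicit Arguments.
Unset Strict Implicit.
Unset Printing Implicit Defensive.
Import Order.TTheory GRing.Theory Num.Theory.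
Local Open Scope ring_scope.

Section FrobeniusInner.
Variables (R : realFieldType) (n : nat).
Implicit Types X Y Z Q U V W : 'M[R]_n.

Lemma mul_self_ge0 (x : R) : 0 <= x * x.
Proof. by rewrite -expr2 sqr_ge0. Qed.

Lemma mxinnerC X Y : mxinner X Y = mxinner Y X.
Proof. by rewrite /mxinner -mxtrace_tr trmx_mul trmxK. Qed.

Lemma mxinnerE X Y : mxinner X Y = \sum_i \sum_j X i j * Y i j.
Proof.
rewrite /mxinner /mxtrace exchange_big /=; apply: eq_bigr => i _.
by rewrite !mxE; apply: eq_bigr => j _; rewrite !mxE.
Qed.

Lemma mxinnerBr X Y Z : mxinner X (Y - Z) = mxinner X Y - mxinner X Z.
Proof. by rewrite /mxinner mulmxBr raddfB. Qed.

Lemma mxinner_psum_eq0 X Y :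
  (forall i j, 0 <= X i j * Y i j) -> mxinner X Y = 0 ->
  forall i j, X i j * Y i j = 0.
Proof.
rewrite mxinnerE => XY_ge0 XY0 i j.
have row0 := psumr_eq0P (fun i _ => sumr_ge0 _ (fun j _ => XY_ge0 i j)) XY0.
exact: (psumr_eq0P (fun j _ => XY_ge0 i j) (row0 i isT) (i:=j) isT).
Qed.

Lemma mxinner_eq0 X : mxinner X X = 0 -> X = 0.
Proof.
move=> XX0; apply/matrixP => i j; rewrite mxE.
have /eqP := mxinner_psum_eq0 (fun i j => mul_self_ge0 (X i j)) XX0 i j.
by rewrite mulf_eq0 orbb => /eqP.
Qed.

Lemma mxinner_conj Q U V : Q^T *m Q = 1%:M ->
  mxinner (Q *m U *m Q^T) (Q *m V *m Q^T) = mxinner U V.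
Proof.
move=> QTQ; rewrite /mxinner !trmx_mul !trmxK !mulmxA.
rewrite -[Q *m U^T *m Q^T *m Q]mulmxA QTQ mulmx1 -!mulmxA mxtrace_mulC !mulmxA.
by rewrite -[U^T *m V *m Q^T *m Q]mulmxA QTQ mulmx1.
Qed.

Lemma symmx_conj Q W : symmx W -> symmx (Q *m W *m Q^T).
Proof. by move=> symW; rewrite /symmx !trmx_mul trmxK symW mulmxA. Qed.

End FrobeniusInner.

Section LinearConstraints.
Variables (R : realFieldType) (n m : nat) (A : 'I_m -> 'M[R]_n).

Lemma opAB X Y : opA A (X - Y) = opA A X - opA A Y.
Proof. by apply/matrixP => i j; rewrite !mxE mxinnerBr. Qed.

Lemma opAadjB y z : opAadj A (y - z) = opAadj A y - opAadj A z.
Proof.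
by rewrite /opAadj -sumrB; apply: eq_bigr => i _; rewrite !mxE scalerBl.
Qed.

Lemma projPB X Y : projP A (X - Y) = projP A X - projP A Y.
Proof. by rewrite /projP opAB mulmxBr opAadjB. Qed.

Lemma mxinner_opAadj y X :
  mxinner (opAadj A y) X = \sum_i y i 0 * opA A X i 0.
Proof.
rewrite mxinnerC /opAadj /mxinner mulmx_sumr raddf_sum; apply: eq_bigr => i _.
by rewrite -scalemxAr /= mxtraceZ mxE -/(mxinner X (A i)) mxinnerC.
Qed.

Lemma opA_opAadj z : opA A (opAadj A z) = gramA A *m z.
Proof.
apply/matrixP => i j; rewrite !mxE (ord1 j) mxinnerC mxinner_opAadj.
by apply: eq_bigr => k _; rewrite !mxE mulrC mxinnerC.
Qed.

Lemma gramA_tr : (gramA A)^T = gramA A.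
Proof. by apply/matrixP => i j; rewrite !mxE mxinnerC. Qed.

Lemma gramA_unit :
  (forall c : 'cV[R]_m, exists X, symmx X /\ opA A X = c) ->
  gramA A \in unitmx.
Proof.
move=> surjA.
have ker0 (z : 'cV[R]_m) : gramA A *m z = 0 -> z = 0.
  move=> Gz0.
  have Az0 : opAadj A z = 0.
    apply: mxinner_eq0; rewrite mxinner_opAadj opA_opAadj Gz0.
    by rewrite big1 // => i _; rewrite mxE mulr0.
  have [X [_ AX]] := surjA z.
  have : mxinner (opAadj A z) X = 0.
    by rewrite Az0 /mxinner trmx0 mul0mx mxtrace0.
  rewrite mxinner_opAadj AX => zz0.
  apply/colP => i; rewrite mxE.
  have /eqP := psumr_eq0P (fun i _ => mul_self_ge0 (z i 0)) zz0 (i:=i) isT.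
  by rewrite mulf_eq0 orbb => /eqP.
rewrite -row_free_unit -kermx_eq0 -submx0; apply/rV_subP => v /sub_kermxP vG0.
rewrite submx0; apply/eqP/trmx_inj; rewrite trmx0; apply: ker0.
by rewrite -gramA_tr -trmx_mul vG0 trmx0.
Qed.

Lemma opA_projP X : gramA A \in unitmx -> opA A (projP A X) = opA A X.
Proof. by move=> Gunit; rewrite /projP opA_opAadj mulmxA mulmxV // mul1mx. Qed.

Lemma mxinner_projP_null X K : opA A K = 0 -> mxinner (projP A X) K = 0.
Proof.
move=> AK0; rewrite mxinner_opAadj AK0.
by rewrite big1 // => i _; rewrite [X in _ * X]mxE mulr0.
Qed.

Lemma projP_fixpoint H K : gramA A \in unitmx ->
  projP A (H - K) + (K - projP A K) = H ->
  opA A K = 0 /\ H - K = projP A (H - K - K).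
Proof.
move=> Gunit fixH.
have eHK : H - K = projP A (H - K - K).
  by rewrite projPB -{1}fixH addrCA addrAC subrr add0r.
split=> //; have := congr1 (opA A) eHK.
rewrite opA_projP // !opAB -{1}[opA A H - opA A K]addr0 => /addrI /eqP.
by rewrite eq_sym oppr_eq0 => /eqP.
Qed.

End LinearConstraints.

Section Blocks.
Variables (R : realFieldType) (n r : nat).
Implicit Types (G Q : 'M[R]_n) (a b : 'I_n).

Definition mixed_block a b : bool := (a < r)%N != (b < r)%N.

Definition block_restrict (P : pred 'I_n) G : 'M[R]_n :=
  \matrix_(a, b) if P a && P b then G a b else 0.

Lemma block_restrict_sym P G : symmx G -> symmx (block_restrict P G).
Proof.
move=> symG; apply/matrixP => a b; rewrite !mxE andbC.
by case: ifP => // _; rewrite -{1}symG mxE.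
Qed.

Lemma inNS_block_restrict Q G :
  symmx G -> inNS Q r (Q *m block_restrict (fun a => (a < r)%N) G *m Q^T).
Proof.
move=> symG; exists (block_restrict (fun a => (a < r)%N) G).
split; first exact: block_restrict_sym.
split=> // a b; rewrite mxE [(r <= a)%N]leqNgt [(r <= b)%N]leqNgt -negb_and.
by move/negbTE->.
Qed.

Lemma inNX_block_restrict Q G :
  symmx G -> inNX Q r (Q *m block_restrict (fun a => (r <= a)%N) G *m Q^T).
Proof.
move=> symG; exists (block_restrict (fun a => (r <= a)%N) G).
split; first exact: block_restrict_sym.
split=> // a b; rewrite mxE [(r <= a)%N]leqNgt [(r <= b)%N]leqNgt -negb_or.
by move->.
Qed.

End Blocks.

Section OmegaWeights.
Variables (R : realFieldType) (n : nat) (lam : 'rV[R]_n) (r : nat).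
Hypothesis lam_pos : forall i : 'I_n, (i < r)%N -> 0 < lam 0 i.
Hypothesis lam_neg : forall i : 'I_n, (r <= i)%N -> lam 0 i < 0.

Lemma ratio_in01 (x y : R) : 0 < x -> y < 0 -> 0 < x / (x - y) < 1.
Proof.
move=> x_gt0 y_lt0; have xy_gt0 : 0 < x - y by lra.
by rewrite divr_gt0 //= ltr_pdivrMr // mul1r; lra.
Qed.

Lemma Omega_in01 a b :
  0 <= Omega lam r a b <= 1 /\ (mixed_block r a b -> 0 < Omega lam r a b < 1).
Proof.
rewrite /mixed_block mxE; case ra: (a < r)%N; case rb: (b < r)%N => /=.
- by rewrite ler01 lexx.
- have rb' : (r <= b)%N by rewrite leqNgt rb.
  have /andP[l0 l1] := ratio_in01 (lam_pos ra) (lam_neg rb').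
  by rewrite !ltW //= l0 l1.
- have ra' : (r <= a)%N by rewrite leqNgt ra.
  have /andP[l0 l1] := ratio_in01 (lam_pos rb) (lam_neg ra').
  by rewrite !ltW //= l0 l1.
- by rewrite lexx ler01.
Qed.

Lemma hadamard_Omega_orth (G : 'M[R]_n) :
  mxinner (G - hadamard (Omega lam r) G) (hadamard (Omega lam r) G) = 0 ->
  forall a b, mixed_block r a b -> G a b = 0.
Proof.
set W := hadamard _ G => orthW a b mixab.
have entry i j : (G - W) i j * W i j =
    (Omega lam r i j * (1 - Omega lam r i j)) * (G i j * G i j).
  by rewrite !mxE; ring.
have entry_ge0 i j : 0 <= (G - W) i j * W i j.
  have [/andP[O0 O1] _] := Omega_in01 i j.
  by rewrite entry mulr_ge0 ?mul_self_ge0 // mulr_ge0 // subr_ge0.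
have /eqP := mxinner_psum_eq0 entry_ge0 orthW a b.
have [_ /(_ mixab) /andP[O0 O1]] := Omega_in01 a b.
by rewrite entry !mulf_eq0 (gt_eqF O0) subr_eq0 (gt_eqF O1) /= orbb => /eqP.
Qed.

Lemma hadamard_Omega_blockdiag (G : 'M[R]_n) :
  (forall a b, mixed_block r a b -> G a b = 0) ->
  hadamard (Omega lam r) G = block_restrict (fun a => (a < r)%N) G /\
  G - hadamard (Omega lam r) G = block_restrict (fun a => (r <= a)%N) G.
Proof.
move=> Gmix; split; apply/matrixP => a b; rewrite !mxE.
  case ra: (a < r)%N; case rb: (b < r)%N => /=; rewrite ?mul1r ?mul0r //;
  by rewrite Gmix ?mulr0 // /mixed_block ra rb.
rewrite [(r <= a)%N]leqNgt [(r <= b)%N]leqNgt.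
case ra: (a < r)%N; case rb: (b < r)%N => /=;
  rewrite ?mul1r ?mul0r ?subrr ?subr0 //;
by rewrite Gmix ?mulr0 ?subr0 // /mixed_block ra rb.
Qed.

End OmegaWeights.

Theorem lemma3 (R : realFieldType) (n m : nat)
    (A : 'I_m -> 'M[R]_n) (b : 'cV[R]_m) (C : 'M[R]_n) (sigma : R)
    (Xs : 'M[R]_n) (ys : 'cV[R]_m) (Ss : 'M[R]_n)
    (Q : 'M[R]_n) (lam : 'rV[R]_n) (r : nat)
    (Zk PiZk : nat -> 'M[R]_n) :
  (* data: A_i, C in S^n, calA surjective onto R^m *)
  (forall i, symmx (A i)) -> symmx C ->
  (forall c : 'cV[R]_m, exists X, symmx X /\ opA A X = c) ->
  0 < sigma ->
  (* (Xs, ys, Ss) is a KKT point *)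
  psd Xs -> opA A Xs = b -> psd Ss -> opAadj A ys + Ss = C -> mxinner Xs Ss = 0 ->
  (* strict complementarity *)
  (\rank Xs + \rank Ss)%N = n ->
  (* one-step ADMM iterates converging to Z* = Xs - sigma Ss *)
  (forall k, symmx (Zk k)) ->
  (forall k, is_psd_proj (Zk k) (PiZk k)) ->
  (forall k, Zk k.+1 = projP A (- (2%:R *: PiZk k) + Zk k) + PiZk k
                       + opAadj A (invmx (gramA A) *m b)
                       + sigma *: projP A C - sigma *: C) ->
  (forall eps : R, 0 < eps -> exists N : nat, forall k, (N <= k)%N ->
      forall i j, `|Zk k i j - (Xs - sigma *: Ss) i j| < eps) ->
  (* eigendecomposition of Z* *)
  Q^T *m Q = 1%:M ->
  Xs - sigma *: Ss = Q *m diag_mx lam *m Q^T ->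
  (forall i j : 'I_n, (i <= j)%N -> lam 0 j <= lam 0 i) ->
  r = \rank Xs ->
  (forall i : 'I_n, (i < r)%N -> 0 < lam 0 i) ->
  (forall i : 'I_n, (r <= i)%N -> lam 0 i < 0) ->
  (* primal nondegeneracy: N_{X*} ∩ R(A^adj) = {0} *)
  (forall H, inNX Q r H -> inRangeAadj A H -> H = 0) ->
  (* dual nondegeneracy: N_{S*} ∩ N(A) = {0} *)
  (forall H, inNS Q r H -> inNullA A H -> H = 0) ->
  (* conclusion: Fix(M) = {0} *)
  forall H, FixM A Q lam r H -> H = 0.
Proof.
move=> _ _ surjA _ _ _ _ _ _ _ _ _ _ _ QTQ _ _ _ lam_pos lam_neg ndX ndS.
move=> H [symH fixH].
have Gunit := gramA_unit surjA.
set K := opD Q lam r H in fixH.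
have [AK0 eHK] := projP_fixpoint Gunit fixH.
set G := Q^T *m H *m Q.
have symG : symmx G by rewrite /symmx /G !trmx_mul trmxK symH mulmxA.
have eH : H = Q *m G *m Q^T.
  by rewrite /G !mulmxA (mulmx1C QTQ) mul1mx -mulmxA (mulmx1C QTQ) mulmx1.
have eHK' : H - K = Q *m (G - hadamard (Omega lam r) G) *m Q^T.
  by rewrite {1}eH mulmxBr mulmxBl.
have orthHK : mxinner (H - K) K = 0 by rewrite eHK mxinner_projP_null.
have Gmix : forall a b, mixed_block r a b -> G a b = 0.
  apply: (hadamard_Omega_orth lam_pos lam_neg).
  by rewrite -(mxinner_conj _ _ QTQ) -eHK'.
have [eW eGW] := hadamard_Omega_blockdiag lam Gmix.
have eK : K = Q *m block_restrict (fun a => (a < r)%N) G *m Q^T by rewrite -eW.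
have K0 : K = 0.
  apply: ndS; first by rewrite eK; apply: inNS_block_restrict.
  by split=> //; rewrite eK; apply/symmx_conj/block_restrict_sym.
have HK0 : H - K = 0.
  apply: ndX; first by rewrite eHK' eGW; apply: inNX_block_restrict.
  by rewrite eHK; eexists.
by rewrite -(subrK K H) HK0 K0 addr0.
Qed.
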